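(* Let $G^1$ be a 1-wconnected 1-graph with infinitely many boundary 1-nodes such that ${}^{*}G^1$ has a hypernode not in its principal 1-galaxy $\Gamma_0^1$. Let $\Gamma_a^1,\Gamma_b^1,\Gamma_c^1$ be 1-galaxies different from $\Gamma_0^1$. If $\Gamma_a^1$ is closer to $\Gamma_0^1$ than is $\Gamma_b^1$, and $\Gamma_b^1$ is closer to $\Gamma_0^1$ than is $\Gamma_c^1$, then $\Gamma_a^1$ is closer to $\Gamma_0^1$ than is $\Gamma_c^1$. Thus the 1-galaxies are partially ordered according to their closeness to $\Gamma_0^1$.
   Context: 1-graphs. A 1-graph $G^1=\{X^0,B,X^1\}$ consists of a graph $G^0=\{X^0,B\}$ (0-nodes, with branches as two-element sets) and 1-nodes. The 1-nodes are obtained by partitioning the 0-tips of $G^0$ (classes of eventually identical one-ended paths) into subsets, some augmented by a single 0-node (each 0-node used at most once). Wdistance. The wdistance $d(x,y)$ is the minimum ordinal length of a two-ended 0-walk or 1-walk terminating at $x$ and $y$. A finite 0-walk has length equal to its number of branch traversals; each 0-tip traversal contributes $\omega$; 1-walk lengths are natural sums. Thus $d<\omega^2$. $\oplus$ denotes the natural sum of ordinals. 1-wconnected: any two nodes are joined by such a walk. A 0-section is the subgraph of $G^0$ induced by a maximal set of pairwise path-connected branches. A boundary 1-node is a 1-node incident to at least two 0-sections. Enlargement. Fix a free ultrafilter $\mathcal F$ on $\mathbb N$. Hypernodes are classes $[x_n]$ of sequences of 0-nodes or of 1-nodes, modulo agreement on a set in $\mathcal F$. A standard hypernode is the class of a constant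 sequence. 1-galaxies. Hypernodes $[x_n],[y_n]$ are 1-limitedly distant if $\{n:d(x_n,y_n)\le\omega\cdot k\}\in\mathcal F$ for some $k\in\mathbb N$. 1-galaxies are the equivalence classes of this relation together with the hyperbranches between their 0-hypernodes. The principal 1-galaxy $\Gamma_0^1$ contains the standard hypernodes. Closeness. For 1-galaxies $\Gamma_a^1,\Gamma_b^1\ne\Gamma_0^1$, $\Gamma^1_a$ is closer to $\Gamma_0^1$ than is $\Gamma_b^1$ if there exist $[y_n]\in\Gamma_a^1$, $[z_n]\in\Gamma_b^1$ and $[x_n]\in\Gamma_0^1$ with $\{n: d(z_n,x_n)\ge d(y_n,x_n)\oplus\omega\cdot m\}\in\mathcal F$ for every $m\in\mathbb N$. *)

From Stdlib Require Import Arith List ClassicalEpsilon.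

Set Implicit Arguments.

(* (a, b) represents the ordinal omega*a + b. *)
Definition ord2 : Type := (nat * nat)%type.

Definition ole (o1 o2 : ord2) : Prop :=
  (fst o1 < fst o2)%nat \/ (fst o1 = fst o2 /\ (snd o1 <= snd o2)%nat).

(* natural (Hessenberg) sum *)
Definition oplus (o1 o2 : ord2) : ord2 := (fst o1 + fst o2, snd o1 + snd o2)%nat.

Definition omega_mul (k : nat) : ord2 := (k, 0%nat).

Section Paths.
Variable V : Type.
Variable adj : V -> V -> Prop.

Definition opath (p : nat -> V) : Prop :=
  (forall n, adj (p n) (p (S n))) /\ (forall m n, p m = p n -> m = n).

(* eventually identical one-ended paths (same 0-tip) *)
Definition tip_equiv (p q : nat -> V) : Prop :=
  exists i j, forall n, p (i + n) = q (j + n).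

Inductive fwalk : V -> V -> nat -> Prop :=
| fwalk0 u : fwalk u u 0
| fwalkS u w v n : adj u w -> fwalk w v n -> fwalk u v (S n).

Definition connected0 (u v : V) : Prop := exists n, fwalk u v n.
End Paths.

(* A 1-graph: 0-nodes, branches (two-element sets, i.e. a symmetric
   irreflexive relation), and 1-nodes. Each one-ended 0-path has its 0-tip
   in exactly one 1-node (tipnode, constant on 0-tips), every 1-node
   contains at least one 0-tip, and a 1-node may embrace one 0-node
   (embed), each 0-node being used at most once. *)
Record graph1 := Graph1 {
  node0 : Type;
  node1 : Type;
  branch : node0 -> node0 -> Prop;
  branch_sym : forall x y, branch x y -> branch y x;
  branch_irr : forall x, ~ branch x x;
  tipnode : (nat -> node0) -> node1;
  tipnode_tip : forall p q, opath branch p -> opath branch q ->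
                tip_equiv p q -> tipnode p = tipnode q;
  tipnode_surj : forall X, exists p, opath branch p /\ tipnode p = X;
  embed : node1 -> option node0;
  embed_inj : forall X Y v, embed X = Some v -> embed Y = Some v -> X = Y
}.

Section OneGraph.
Variable G : graph1.

Definition point : Type := (node0 G + node1 G)%type.

(* p and q denote the same place: equal, or a 1-node and the 0-node it embraces *)
Definition meets (p q : point) : Prop :=
  p = q \/
  exists X v, embed G X = Some v /\
    ((p = inl v /\ q = inr X) \/ (p = inr X /\ q = inl v)).

Definition owalk (u : node0 G) (X : node1 G) : Prop :=
  exists w : nat -> node0 G,
    w 0 = u /\ (forall n, branch G (w n) (w (S n))) /\
    exists i, opath (branch G) (fun n => w (i + n)) /\
              tipnode G (fun n => w (i + n)) = X.

Inductive section0 : point -> point -> ord2 -> Prop :=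
| sec_fin u v n : fwalk (branch G) u v n -> section0 (inl u) (inl v) (0, n)%nat
| sec_one u X : owalk u X -> section0 (inl u) (inr X) (1, 0)%nat
| sec_one_rev u X : owalk u X -> section0 (inr X) (inl u) (1, 0)%nat
| sec_endless u X Y : owalk u X -> owalk u Y -> section0 (inr X) (inr Y) (2, 0)%nat.

Inductive wwalk : point -> point -> ord2 -> Prop :=
| wwalk_nil p q : meets p q -> wwalk p q (0, 0)%nat
| wwalk_cons p p' q' q l o :
    meets p p' -> section0 p' q' l -> wwalk q' q o -> wwalk p q (oplus l o).

Definition wdist (p q : point) : ord2 :=
  epsilon (inhabits (0, 0)%nat)
    (fun o => wwalk p q o /\ forall o', wwalk p q o' -> ole o o').

Definition one_wconnected : Prop := forall p q : point, exists o, wwalk p q o.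

(* 0-sections: maximal sets of pairwise path-connected branches; the branch
   {u,v} is represented by its endpoint u. *)
Definition incident (X : node1 G) (u : node0 G) : Prop :=
  (exists p, opath (branch G) p /\ tipnode G p = X /\ connected0 (branch G) (p 0) u)
  \/ (exists w, embed G X = Some w /\ connected0 (branch G) w u).

Definition boundary1 (X : node1 G) : Prop :=
  exists u1 v1 u2 v2,
    branch G u1 v1 /\ branch G u2 v2 /\ incident X u1 /\ incident X u2 /\
    ~ connected0 (branch G) u1 u2.

Definition inf_many_boundary : Prop :=
  forall l : list (node1 G), exists X, boundary1 X /\ ~ In X l.

Definition free_ultrafilter (F : (nat -> Prop) -> Prop) : Prop :=
  F (fun _ => True) /\ ~ F (fun _ => False) /\
  (forall A B, F A -> F B -> F (fun n => A n /\ B n)) /\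
  (forall A B : nat -> Prop, F A -> (forall n, A n -> B n) -> F B) /\
  (forall A, F A \/ F (fun n => ~ A n)) /\
  (forall A, F A -> forall N, exists n, N <= n /\ A n).

(* representatives of hypernodes: sequences of 0-nodes or of 1-nodes *)
Definition hyperseq : Type := ((nat -> node0 G) + (nat -> node1 G))%type.

Definition hs (h : hyperseq) : nat -> point :=
  match h with inl f => fun n => inl (f n) | inr f => fun n => inr (f n) end.

Definition standard (h : hyperseq) : Prop :=
  (exists v, h = inl (fun _ => v)) \/ (exists X, h = inr (fun _ => X)).

Variable F : (nat -> Prop) -> Prop.

Definition lim1 (x y : hyperseq) : Prop :=
  exists k : nat, F (fun n => ole (wdist (hs x n) (hs y n)) (omega_mul k)).

Definition in_galaxy (x a : hyperseq) : Prop := lim1 x a.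

Definition in_principal (x : hyperseq) : Prop :=
  exists s, standard s /\ lim1 x s.

Definition closer (a b : hyperseq) : Prop :=
  exists y z x, in_galaxy y a /\ in_galaxy z b /\ in_principal x /\
    forall m : nat,
      F (fun n => ole (oplus (wdist (hs y n) (hs x n)) (omega_mul m))
                      (wdist (hs z n) (hs x n))).
End OneGraph.

From Stdlib Require Import Arith List ClassicalEpsilon.
From Stdlib Require Import Wf_nat Classical Lia.

Set Implicit Arguments.

(* Only the omega-coefficient of the wdistance matters: it satisfies the
   triangle inequality and is symmetric, because walks concatenate and
   reverse.  "Closer" then says that the omega-coefficient of d(z_n, x_n)
   exceeds that of d(y_n, x_n) by an unlimited amount along F, and this
   unlimited gap survives moving y, z or x by a limited distance.  Given
   the two gaps for a < b and b < c, move the reference node of the second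
   gap into the principal galaxy of the first and its near node into the
   galaxy of b, and add the gaps.  The nonprincipality and boundary
   hypotheses only ensure that there are galaxies to compare; transitivity
   does not use them. *)

Lemma nat_least (P : nat -> Prop) :
  (exists n, P n) -> exists n, P n /\ forall m, P m -> n <= m.
Proof.
  intro HP.
  destruct (dec_inh_nat_subset_has_unique_least_element P (fun n => classic (P n)) HP)
    as [n [Hn _]].
  exists n; exact Hn.
Qed.

Section FiniteWalks.
Variable V : Type.
Variable adj : V -> V -> Prop.

Lemma fwalk_snoc (u v w : V) n : fwalk adj u v n -> adj v w -> fwalk adj u w (S n).
Proof.
  induction 1; intros Hvw.
  - econstructor; [exact Hvw | constructor].
  - econstructor; eauto.
Qed.

Lemma fwalk_rev (adj_sym : forall x y, adj x y -> adj y x) (u v : V) n :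
  fwalk adj u v n -> fwalk adj v u n.
Proof.
  induction 1; [constructor | eapply fwalk_snoc; eauto].
Qed.

End FiniteWalks.

Lemma oplus_0l (o : ord2) : oplus (0, 0) o = o.
Proof. destruct o; reflexivity. Qed.

Lemma oplus_0r (o : ord2) : oplus o (0, 0) = o.
Proof. destruct o; unfold oplus; simpl; f_equal; lia. Qed.

Lemma oplusA (a b c : ord2) : oplus a (oplus b c) = oplus (oplus a b) c.
Proof. destruct a, b, c; unfold oplus; simpl; f_equal; lia. Qed.

Lemma oplusC (a b : ord2) : oplus a b = oplus b a.
Proof. destruct a, b; unfold oplus; simpl; f_equal; lia. Qed.

Lemma ole_antisym (o o' : ord2) : ole o o' -> ole o' o -> o = o'.
Proof. destruct o, o'; unfold ole; simpl; intros; f_equal; lia. Qed.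

Lemma ole_fst (o o' : ord2) : ole o o' -> fst o <= fst o'.
Proof. unfold ole; lia. Qed.

Lemma ole_of_fst_lt (o o' : ord2) : fst o < fst o' -> ole o o'.
Proof. left; assumption. Qed.

Section OneGraph.
Variable G : graph1.

Lemma meets_refl (p : point G) : meets p p.
Proof. left; reflexivity. Qed.

Lemma meets_sym (p q : point G) : meets p q -> meets q p.
Proof.
  intros [-> | (X & v & Hv & [[-> ->] | [-> ->]])];
    [left; reflexivity | right; exists X, v; auto ..].
Qed.

Lemma meets_trans (p q r : point G) : meets p q -> meets q r -> meets p r.
Proof.
  intros [-> | (X & v & Hv & Hpq)] Hqr; [exact Hqr |].
  destruct Hqr as [<- | (Y & w & Hw & Hqr)]; [right; exists X, v; auto |].
  destruct Hpq as [[-> ->] | [-> ->]], Hqr as [[Eq ->] | [Eq ->]];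
    try discriminate; injection Eq as ->.
  - rewrite Hv in Hw; injection Hw as ->; left; reflexivity.
  - rewrite (embed_inj G X Y Hv Hw); left; reflexivity.
Qed.

Lemma section0_rev (p q : point G) l : section0 p q l -> section0 q p l.
Proof.
  destruct 1.
  - constructor; apply fwalk_rev; [exact (branch_sym G) | assumption].
  - apply sec_one_rev; assumption.
  - apply sec_one; assumption.
  - eapply sec_endless; eassumption.
Qed.

Lemma wwalk_meets_l (p q r : point G) o : meets p q -> wwalk q r o -> wwalk p r o.
Proof.
  intros Hpq Hqr; destruct Hqr as [? ? Hm | ? ? ? ? ? ? Hm Hs Hw].
  - constructor; eapply meets_trans; eassumption.
  - eapply wwalk_cons; [eapply meets_trans | |]; eassumption.
Qed.

Lemma wwalk_cat (p q r : point G) o1 o2 :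
  wwalk p q o1 -> wwalk q r o2 -> wwalk p r (oplus o1 o2).
Proof.
  intros H1; revert o2 r; induction H1; intros o2 r H2.
  - rewrite oplus_0l; eapply wwalk_meets_l; eassumption.
  - rewrite <- oplusA; econstructor; eauto.
Qed.

Lemma wwalk_rev (p q : point G) o : wwalk p q o -> wwalk q p o.
Proof.
  induction 1 as [p q Hm | p p' q' q l o Hm Hs _ IH].
  - constructor; apply meets_sym; assumption.
  - assert (Hback : wwalk q' p l).
    { rewrite <- (oplus_0r l).
      eapply wwalk_cons; [apply meets_refl | apply section0_rev; eassumption |].
      constructor; apply meets_sym; assumption. }
    rewrite oplusC; eapply wwalk_cat; eassumption.
Qed.

Hypothesis HC : one_wconnected G.

Lemma wdist_spec (p q : point G) :
  wwalk p q (wdist p q) /\ forall o, wwalk p q o -> ole (wdist p q) o.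
Proof.
  unfold wdist; apply epsilon_spec.
  destruct (HC p q) as [[a b] Hab].
  destruct (nat_least (fun a => exists b, wwalk p q (a, b))) as (a0 & (b1 & Hb1) & Ha0);
    [eauto |].
  destruct (nat_least (fun b => wwalk p q (a0, b))) as (b0 & Hb0 & Hb0min); [eauto |].
  exists (a0, b0); split; [exact Hb0 |].
  intros [a' b'] Hw; unfold ole; simpl.
  assert (a0 <= a') by (apply Ha0; eauto).
  destruct (Nat.eq_dec a0 a') as [<- |]; [right; auto | left; lia].
Qed.

Lemma wdist_walk (p q : point G) : wwalk p q (wdist p q).
Proof. exact (proj1 (wdist_spec p q)). Qed.

Lemma wdist_min (p q : point G) o : wwalk p q o -> ole (wdist p q) o.
Proof. exact (proj2 (wdist_spec p q) o). Qed.

Lemma wdist_sym (p q : point G) : wdist p q = wdist q p.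
Proof.
  apply ole_antisym; apply wdist_min, wwalk_rev, wdist_walk.
Qed.

Lemma wdist_triangle (p q r : point G) :
  ole (wdist p r) (oplus (wdist p q) (wdist q r)).
Proof. apply wdist_min, wwalk_cat with q; apply wdist_walk. Qed.

Lemma wdist_omega_triangle (p q r : point G) :
  fst (wdist p r) <= fst (wdist p q) + fst (wdist q r).
Proof. apply (ole_fst (wdist_triangle p q r)). Qed.

Section Galaxies.
Variable F : (nat -> Prop) -> Prop.
Hypothesis F_true : F (fun _ => True).
Hypothesis F_and : forall A B, F A -> F B -> F (fun n => A n /\ B n).
Hypothesis F_up : forall A B : nat -> Prop, F A -> (forall n, A n -> B n) -> F B.

Definition omega_dist (x y : hyperseq G) (n : nat) : nat :=
  fst (wdist (hs x n) (hs y n)).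

Definition limited (x y : hyperseq G) : Prop :=
  exists k, F (fun n => omega_dist x y n <= k).

Definition farther (y z x : hyperseq G) : Prop :=
  forall m, F (fun n => omega_dist y x n + m <= omega_dist z x n).

Lemma limited_of_lim1 (x y : hyperseq G) : lim1 F x y -> limited x y.
Proof.
  intros [k Hk]; exists k; eapply F_up; [exact Hk |].
  intros n; apply ole_fst.
Qed.

Lemma limited_sym (x y : hyperseq G) : limited x y -> limited y x.
Proof.
  intros [k Hk]; exists k; eapply F_up; [exact Hk |].
  intros n; unfold omega_dist; rewrite wdist_sym; trivial.
Qed.

Lemma limited_trans (x y z : hyperseq G) : limited x y -> limited y z -> limited x z.
Proof.
  intros [k Hk] [l Hl]; exists (k + l); eapply F_up; [exact (F_and Hk Hl) |].
  intros n [Hxy Hyz]; unfold omega_dist in *.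
  pose proof (wdist_omega_triangle (hs x n) (hs y n) (hs z n)); lia.
Qed.

Lemma standard_const (s : hyperseq G) : standard s -> exists P, forall n, hs s n = P.
Proof. intros [[v ->] | [X ->]]; [exists (inl v) | exists (inr X)]; reflexivity. Qed.

Lemma limited_standard (s t : hyperseq G) : standard s -> standard t -> limited s t.
Proof.
  intros Hs Ht.
  destruct (standard_const Hs) as [P HP], (standard_const Ht) as [Q HQ].
  exists (fst (wdist P Q)); eapply F_up; [exact F_true |].
  intros n _; unfold omega_dist; rewrite HP, HQ; trivial.
Qed.

Lemma limited_principal (x x' : hyperseq G) :
  in_principal F x -> in_principal F x' -> limited x x'.
Proof.
  intros (s & Hs & Hxs) (t & Ht & Hxt).
  apply (limited_trans (limited_of_lim1 Hxs)).
  apply (limited_trans (limited_standard Hs Ht)), limited_sym, limited_of_lim1, Hxt.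
Qed.

Lemma closer_farther (a b : hyperseq G) :
  closer F a b ->
  exists y z x, in_galaxy F y a /\ in_galaxy F z b /\ in_principal F x /\ farther y z x.
Proof.
  intros (y & z & x & Hy & Hz & Hx & Hgap).
  exists y, z, x; repeat split; auto.
  intro m; eapply F_up; [exact (Hgap m) |].
  intros n; apply ole_fst.
Qed.

Lemma farther_closer (a b y z x : hyperseq G) :
  in_galaxy F y a -> in_galaxy F z b -> in_principal F x -> farther y z x -> closer F a b.
Proof.
  intros Hy Hz Hx Hgap; exists y, z, x; repeat split; auto.
  intro m; eapply F_up; [exact (Hgap (S m)) |].
  intros n Hn; apply ole_of_fst_lt; unfold omega_dist in Hn; simpl; lia.
Qed.

Lemma farther_trans (y z w x : hyperseq G) :
  farther y z x -> farther z w x -> farther y w x.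
Proof.
  intros Hyz Hzw m; eapply F_up; [exact (F_and (Hyz m) (Hzw 0)) |].
  intros n [H1 H2]; lia.
Qed.

Lemma farther_move_near (y y' z x : hyperseq G) :
  limited y' y -> farther y z x -> farther y' z x.
Proof.
  intros [k Hk] Hgap m; eapply F_up; [exact (F_and Hk (Hgap (m + k))) |].
  intros n [H1 H2]; unfold omega_dist in *.
  pose proof (wdist_omega_triangle (hs y' n) (hs y n) (hs x n)); lia.
Qed.

Lemma farther_move_ref (y z x x' : hyperseq G) :
  limited x x' -> farther y z x -> farther y z x'.
Proof.
  intros [k Hk] Hgap m; eapply F_up; [exact (F_and Hk (Hgap (m + 2 * k))) |].
  intros n [H1 H2]; unfold omega_dist in *.
  pose proof (wdist_omega_triangle (hs y n) (hs x n) (hs x' n)).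
  pose proof (wdist_omega_triangle (hs z n) (hs x' n) (hs x n)).
  rewrite (wdist_sym (hs x' n)) in *; lia.
Qed.

End Galaxies.
End OneGraph.

Theorem theorem11p3 (G : graph1) (F : (nat -> Prop) -> Prop) :
  free_ultrafilter F ->
  one_wconnected G ->
  inf_many_boundary G ->
  (exists h : hyperseq G, ~ in_principal F h) ->
  forall a b c : hyperseq G,
    ~ in_principal F a -> ~ in_principal F b -> ~ in_principal F c ->
    closer F a b -> closer F b c -> closer F a c.
Proof.
  intros (F_true & _ & F_and & F_up & _) HC _ _ a b c _ _ _ Hab Hbc.
  destruct (closer_farther F_up Hab) as (y & z & x & Hy & Hz & Hx & Hyzx).
  destruct (closer_farther F_up Hbc) as (y' & z' & x' & Hy' & Hz' & Hx' & Hyzx').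
  apply (farther_closer F_up Hy Hz' Hx).
  apply (farther_trans F_and F_up Hyzx).
  apply (farther_move_near HC F_and F_up (y := y')).
  - apply (limited_trans HC F_and F_up (limited_of_lim1 F_up Hz)).
    apply limited_sym, limited_of_lim1; assumption.
  - apply (farther_move_ref HC F_and F_up (x := x')); [| exact Hyzx'].
    apply limited_principal; assumption.
Qed.
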